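(* Let $\mathcal{A}$ be a complete rpoNFA with a single initial state and depth $k$. Then $L(\mathcal{A})$ is $k$-$\mathcal{R}$-trivial.
   Context: An NFA $\mathcal{A}=(Q,\Sigma,\cdot,I,F)$ is complete if $q\cdot a\neq\emptyset$ for all $q,a$. A poNFA is an NFA whose reachability relation is a partial order (only self-loops as cycles); an rpoNFA is a poNFA such that $q\in q\cdot a$ implies $q\cdot a=\{q\}$. The depth is the number of input symbols on a longest simple path (pairwise distinct states) starting in an initial state. $\mathrm{sub}_k(v)$ is the set of subsequences of $v$ of length at most $k$; $u\sim_k v$ iff $\mathrm{sub}_k(u)=\mathrm{sub}_k(v)$; $x\sim^{\mathcal{R}}_k y$ iff each prefix of $x$ is $\sim_k$-equivalent to some prefix of $y$ and vice versa. A language is $k$-$\mathcal{R}$-trivial if it is a union of $\sim^{\mathcal{R}}_k$-classes. *)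

From HB Require Import structures.
From mathcomp Require Import all_boot.
Set Implicit Arguments. Unset Strict Implicit. Unset Printing Implicit Defensive.

Record nfa (Q Sigma : finType) := NFA {
  trans : Q -> Sigma -> {set Q};
  init  : {set Q};
  final : {set Q} }.

Section NFA.
Variables (Q Sigma : finType) (A : nfa Q Sigma).

Definition trans_set (S : {set Q}) (a : Sigma) : {set Q} :=
  \bigcup_(q in S) trans A q a.
Definition trans_word (S : {set Q}) (w : seq Sigma) : {set Q} :=
  foldl trans_set S w.

Definition accepts (w : seq Sigma) : bool :=
  trans_word (init A) w :&: final A != set0.

Definition complete : Prop := forall q a, trans A q a != set0.

Definition reach (p q : Q) : Prop := exists w, q \in trans_word [set p] w.

(* poNFA: reachability relation is a partial order (antisymmetric; it is
   always reflexive and transitive) *)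
Definition poNFA : Prop := forall p q, reach p q -> reach q p -> p = q.

Definition rpoNFA : Prop :=
  poNFA /\ forall q a, q \in trans A q a -> trans A q a = [set q].

Fixpoint is_run (q : Q) (w : seq Sigma) (qs : seq Q) : bool :=
  match w, qs with
  | [::], [::] => true
  | a :: w', p :: qs' => (p \in trans A q a) && is_run p w' qs'
  | _, _ => false
  end.

Definition simple_path (q : Q) (w : seq Sigma) (qs : seq Q) : bool :=
  is_run q w qs && uniq (q :: qs).

Definition has_depth (k : nat) : Prop :=
  (exists q w qs, [/\ q \in init A, simple_path q w qs & size w = k]) /\
  (forall q w qs, q \in init A -> simple_path q w qs -> size w <= k).

End NFA.

Section Subseq.
Variable (Sigma : eqType).

Definition sub_k (k : nat) (v : seq Sigma) : pred (seq Sigma) :=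
  fun x => (size x <= k) && subseq x v.

Definition sim_k (k : nat) (u v : seq Sigma) : Prop := sub_k k u =i sub_k k v.

Definition simR_k (k : nat) (x y : seq Sigma) : Prop :=
  (forall x', prefix x' x -> exists2 y', prefix y' y & sim_k k x' y') /\
  (forall y', prefix y' y -> exists2 x', prefix x' x & sim_k k x' y').

Definition k_R_trivial (k : nat) (L : pred (seq Sigma)) : Prop :=
  forall x y, simR_k k x y -> L x = L y.

End Subseq.

From mathcomp Require Import all_boot.
Set Implicit Arguments. Unset Strict Implicit. Unset Printing Implicit Defensive.

(* Fix a state q all of whose simple paths read at most k letters and induct
   on k.  In an rpoNFA a letter looping at q keeps {q} fixed.  If every letter
   of x loops at q, so does every letter of y, since x ~^R_(k+1) y forces x and
   y to use the same letters.  Otherwise x = u a x' with u looping at q and a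
   leaving q; the R-equivalence forces y = v a y' with v looping at q as well
   and x' ~^R_k y'.  As q.a avoids q and reachability is a partial order, the
   states of q.a have depth at most k, so induction applies to x' and y'.  For
   k = 0, completeness makes every letter loop at q. *)


Section Subwords.
Variable T : eqType.
Implicit Types (u v w x y z t : seq T) (a b : T).

Lemma subseq_cons_cat_notin a u w s :
  a \notin u -> subseq (a :: w) (u ++ a :: s) = subseq w s.
Proof.
elim: u => [|c u IHu] /=; first by rewrite eqxx.
by rewrite inE negb_or => /andP[/negbTE-> /IHu].
Qed.

Lemma prefix_cat_cons_split v a y z :
  prefix z (v ++ a :: y) -> (exists2 c, c \in z & c \notin v) ->
  exists2 y1, z = v ++ a :: y1 & prefix y1 y.
Proof.
elim: v z => [|c v IHv] [|d z] //=.
- by move=> _ [].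
- by move=> /andP[/eqP-> pz] _; exists z.
- by move=> _ [].
move=> /andP[/eqP dc pz] [e]; rewrite !inE negb_or dc.
case: eqP => [//|_ ez /andP[_ ev]].
by have [y1 -> py1] := IHv _ pz (ex_intro2 _ _ e ez ev); exists y1.
Qed.

Lemma sim_k_sym k x y : sim_k k x y -> sim_k k y x.
Proof. by move=> sxy w; rewrite sxy. Qed.

Lemma sim_k_mem k x y : sim_k k.+1 x y -> x =i y.
Proof.
by move=> sxy b; have := sxy [:: b]; rewrite !unfold_in /sub_k /= !sub1seq.
Qed.

Lemma simR_k_sym k x y : simR_k k x y -> simR_k k y x.
Proof.
case=> Sxy Syx; split=> [y' /Syx|x' /Sxy] [z pz /sim_k_sym sz]; by exists z.
Qed.

Lemma simR_k_mem k x y : simR_k k.+1 x y -> x =i y.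
Proof.
suff sub z t : simR_k k.+1 z t -> {subset t <= z}.
  by move=> sxy b; apply/idP/idP; apply: sub => //; apply: simR_k_sym.
case=> _ /(_ t (prefix_refl t)) [z' /prefixP[z'' ->] /sim_k_mem sz'] b bt.
by rewrite mem_cat sz' bt.
Qed.

Lemma simR_k_tail_prefix k u v a x y :
  a \notin u -> a \notin v -> simR_k k.+1 (u ++ a :: x) (v ++ a :: y) ->
  forall x1, prefix x1 x -> exists2 y1, prefix y1 y & sim_k k x1 y1.
Proof.
move=> au av [Sxy _] x1 px1.
have pux1 : prefix (u ++ a :: x1) (u ++ a :: x).
  by rewrite prefix_catr // eqxx /= eqxx.
have [z pz sz] := Sxy _ pux1.
have az : a \in z by rewrite -(sim_k_mem sz) mem_cat mem_head orbT.
have [y1 ez py1] := prefix_cat_cons_split pz (ex_intro2 _ _ a az av).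
exists y1 => // w; have := sz (a :: w).
by rewrite ez !unfold_in /sub_k /= !subseq_cons_cat_notin.
Qed.

Lemma simR_k_tail k u v a x y :
  a \notin u -> a \notin v -> simR_k k.+1 (u ++ a :: x) (v ++ a :: y) ->
  simR_k k x y.
Proof.
move=> au av sxy; split; first exact: simR_k_tail_prefix sxy.
move=> y1 /(simR_k_tail_prefix av au (simR_k_sym sxy)) [x1 px1 sx1].
by exists x1 => //; apply: sim_k_sym.
Qed.

Lemma simR_k_split_first (P : pred T) k u a x y :
  all P u -> ~~ P a -> simR_k k.+1 (u ++ a :: x) y ->
  exists v, exists y', [/\ y = v ++ a :: y', all P v & simR_k k x y'].
Proof.
move=> uP aP sxy.
have au : a \notin u := contra (allP uP a) aP.
have /split_find : has (predC P) y.
  apply/hasP; exists a => //.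
  by rewrite -(simR_k_mem sxy) mem_cat mem_head orbT.
move: sxy => /[swap] -[b v y' bP]; rewrite has_predC negbK cat_rcons => vP sxy.
have bv : b \notin v := contra (allP vP b) bP.
suff ab : a = b.
  by subst b; exists v, y'; split=> //; exact: simR_k_tail au bv sxy.
have /sxy.2[z pz szv] : prefix (rcons v b) (v ++ b :: y').
  by rewrite -cat_rcons prefix_prefix.
have bz : b \in z by rewrite (sim_k_mem szv) mem_rcons mem_head.
have bu : b \notin u := contra (allP uP b) bP.
have [x1 ez _] := prefix_cat_cons_split pz (ex_intro2 _ _ b bz bu).
have : a \in rcons v b by rewrite -(sim_k_mem szv) ez mem_cat mem_head orbT.
by rewrite mem_rcons inE => /orP[/eqP //|av]; case/negP: aP; apply: (allP vP).
Qed.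

End Subwords.

Section Automaton.
Variables (Q Sigma : finType) (A : nfa Q Sigma).
Implicit Types (p q r : Q) (S : {set Q}) (a : Sigma) (w x y : seq Sigma).

Lemma trans_word_cons S a w :
  trans_word A S (a :: w) = trans_word A (trans_set A S a) w.
Proof. by []. Qed.

Lemma trans_word_cat S x y :
  trans_word A S (x ++ y) = trans_word A (trans_word A S x) y.
Proof. exact: foldl_cat. Qed.

Lemma trans_set1 p a : trans_set A [set p] a = trans A p a.
Proof. exact: big_set1. Qed.

Lemma mem_trans_word S w r :
  (r \in trans_word A S w) <->
  exists2 p, p \in S & r \in trans_word A [set p] w.
Proof.
elim: w S => [|a w IHw] S.
  by split=> [rS|[p pS /set1P ->]]; first by exists r; rewrite ?set11.
rewrite !trans_word_cons; split.
  case/IHw=> p' /bigcupP[p pS p'p] rp'.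
  by exists p => //; apply/IHw; exists p'; rewrite ?trans_set1.
case=> p pS /IHw[p' p'p rp']; apply/IHw; exists p' => //.
by rewrite trans_set1 in p'p; apply/bigcupP; exists p.
Qed.

Lemma eq_trans_word S x y :
  (forall p, p \in S -> trans_word A [set p] x = trans_word A [set p] y) ->
  trans_word A S x = trans_word A S y.
Proof.
move=> Exy; apply/setP=> r.
apply/idP/idP=> /mem_trans_word[p pS rp]; apply/mem_trans_word; exists p => //.
  by rewrite -Exy.
by rewrite Exy.
Qed.

Lemma run_reach p w qs r : is_run A p w qs -> r \in qs -> reach A p r.
Proof.
elim: w p qs => [|a w IHw] p [|s qs] //= /andP[sp rs].
rewrite inE => /predU1P[-> | /(IHw _ _ rs)[w' rw']].
  by exists [:: a]; rewrite trans_word_cons trans_set1.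
exists (a :: w'); rewrite trans_word_cons trans_set1.
by apply/mem_trans_word; exists s.
Qed.

Definition self_loop q : pred Sigma := fun a => q \in trans A q a.

Definition depth_le q k : Prop :=
  forall w qs, simple_path A q w qs -> size w <= k.

Lemma depth_le0_self_loop q a : complete A -> depth_le q 0 -> self_loop q a.
Proof.
move=> compA dq0; have /set0Pn[p pqa] := compA q a.
case: (eqVneq p q) pqa => [-> //|pq pqa].
have := dq0 [:: a] [:: p].
by rewrite /simple_path /= pqa !inE eq_sym pq => /(_ isT).
Qed.

Lemma depth_le_succ q q' a k : poNFA A -> depth_le q k.+1 ->
  q' \in trans A q a -> q' != q -> depth_le q' k.
Proof.
move=> poA dq q'qa q'q w qs /andP[run uniq_qs].
have qqs : q \notin qs.
  apply: contra q'q => /(run_reach run) q'q; apply/eqP/poA => //.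
  by exists [:: a]; rewrite trans_word_cons trans_set1.
suff : size (a :: w) <= k.+1 by [].
apply: (dq _ (q' :: qs)).
by rewrite /simple_path /= q'qa run !inE negb_or eq_sym q'q qqs.
Qed.

Section RpoNFA.
Hypothesis loop_singleton :
  forall q a, q \in trans A q a -> trans A q a = [set q].

Lemma trans_word_self_loops q u :
  all (self_loop q) u -> trans_word A [set q] u = [set q].
Proof.
elim: u => // a u IHu /andP[qa qu].
by rewrite trans_word_cons trans_set1 loop_singleton // IHu.
Qed.

Hypothesis poA : poNFA A.
Hypothesis completeA : complete A.

Lemma trans_word_simR k q x y :
  depth_le q k -> simR_k k x y ->
  trans_word A [set q] x = trans_word A [set q] y.
Proof.
elim: k q x y => [|k IHk] q x y dq sxy.
  have loops z : all (self_loop q) z.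
    by apply/allP=> a _; apply: depth_le0_self_loop.
  by rewrite !trans_word_self_loops.
have [qx|] := boolP (all (self_loop q) x).
  have qy : all (self_loop q) y by rewrite -(eq_all_r (simR_k_mem sxy)).
  by rewrite !trans_word_self_loops.
move: sxy; rewrite -has_predC => /[swap] /split_find[a u x' na].
rewrite has_predC negbK cat_rcons => qu sxy.
have [v [y' [-> qv sxy']]] := simR_k_split_first qu na sxy.
rewrite !trans_word_cat (trans_word_self_loops qu) (trans_word_self_loops qv).
rewrite !trans_word_cons trans_set1.
apply: eq_trans_word => q' q'qa; apply: IHk sxy'.
have q'q : q' != q.
  by apply: contraNneq na => q'E; rewrite /self_loop -q'E {2}q'E.
exact: depth_le_succ dq q'qa q'q.
Qed.

End RpoNFA.
End Automaton.

Theorem lemma3 (Q Sigma : finType) (A : nfa Q Sigma) (k : nat) :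
  complete A -> rpoNFA A -> (exists i0, init A = [set i0]) -> has_depth A k ->
  k_R_trivial k (accepts A).
Proof.
move=> compA [poA loopA] [i0 initA] [_ depthA] x y sxy.
have di0 : depth_le A i0 k by move=> w qs; apply: depthA; rewrite initA set11.
by rewrite /accepts initA (trans_word_simR loopA poA compA di0 sxy).
Qed.
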